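(* Let $(\mathcal{A},\{\mu_n\}_{n\ge1})$ be an $A_\infty$-algebra and $(\mathcal{M},\{\nu_n\}_{n\ge1})$ a representation of it. A degree $0$ linear map $\mathcal{R}:\mathcal{M}\to\mathcal{A}$ is a strict homotopy relative Rota–Baxter operator if and only if the map $\widetilde{\mathcal{R}}:\mathcal{A}\oplus\mathcal{M}\to\mathcal{A}\oplus\mathcal{M}$, $\widetilde{\mathcal{R}}(a,u)=(\mathcal{R}(u),0)$, is a strict homotopy Nijenhuis operator on the semidirect product $A_\infty$-algebra $(\mathcal{A}\oplus\mathcal{M},\{\mu_n^\ltimes\}_{n\ge1})$.
   Context: Over a field of characteristic $0$. An $A_\infty$-algebra is a graded vector space $\mathcal{A}=\bigoplus_{i\in\mathbb{Z}}\mathcal{A}_i$ with graded linear maps $\mu_n:\mathcal{A}^{\otimes n}\to\mathcal{A}$ of degree $n-2$ such that for each $k\ge1$ and homogeneous $a_1,\dots,a_k$: $\sum_{m+n=k+1}\sum_{i=1}^m(-1)^{i(n+1)+n(|a_1|+\cdots+|a_{i-1}|)}\mu_m(a_1,\dots,a_{i-1},\mu_n(a_i,\dots,a_{i+n-1}),a_{i+n},\dots,a_k)=0$. A representation is a graded vector space $\mathcal{M}$ with maps $\nu_n:\bigoplus_{r=1}^n(\mathcal{A}^{\otimes r-1}\otimes\mathcal{M}\otimes\mathcal{A}^{\otimes n-r})\to\mathcal{M}$ of degree $n-2$ satisfying the same identities whenever exactly one argument lies in $\mathcal{M}$ (with the operations applied to an argument containing that element replaced by $\nu$). The semidirect product is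 $\mu_n^\ltimes((a_1,u_1),\dots,(a_n,u_n))=(\mu_n(a_1,\dots,a_n),\sum_{r=1}^n\nu_n(a_1,\dots,u_r,\dots,a_n))$, an $A_\infty$-algebra. A degree $0$ map $\mathcal{R}:\mathcal{M}\to\mathcal{A}$ is a strict homotopy relative Rota–Baxter operator if $\mu_n(\mathcal{R}u_1,\dots,\mathcal{R}u_n)=\sum_{r=1}^n\mathcal{R}(\nu_n(\mathcal{R}u_1,\dots,u_r,\dots,\mathcal{R}u_n))$ for all $n\ge1$ and homogeneous $u_i$. On an $A_\infty$-algebra $(\mathcal{B},\{m_n\})$ a degree $0$ linear map $\mathcal{N}$ is a strict homotopy Nijenhuis operator if for all $n\ge1$ and homogeneous $b_1,\dots,b_n$: $m_n(\mathcal{N}b_1,\dots,\mathcal{N}b_n)=\sum_{k=1}^n(-1)^{k-1}\mathcal{N}^k\Big(\sum_{S\subseteq\{1..n\},|S|=k}m_n(c^S_1,\dots,c^S_n)\Big)$ where $c^S_i=b_i$ if $i\in S$ and $c^S_i=\mathcal{N}(b_i)$ if $i\notin S$. *)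

From HB Require Import structures.
From mathcomp Require Import all_boot all_order all_algebra.
Set Implicit Arguments. Unset Strict Implicit. Unset Printing Implicit Defensive.
Import Order.TTheory GRing.Theory Num.Theory.
Local Open Scope ring_scope.

(* Graded vector spaces are modelled as a K-module V together with a family
   G : int -> V -> Prop, where "G i v" means "v is homogeneous of degree i";
   is_grading says that the G i are subspaces and V is their direct sum. *)

Section Defs.
Variable K : fieldType.

Definition is_grading (V : lmodType K) (G : int -> V -> Prop) : Prop :=
  [/\ forall i, G i 0,
      forall i (a : K) x y, G i x -> G i y -> G i (a *: x + y),
      forall v : V, exists s : seq (int * V),
          [/\ uniq (map fst s), (forall p, p \in s -> G p.1 p.2)
            & v = \sum_(p <- s) p.2]
    & forall s : seq (int * V), uniq (map fst s) ->
          (forall p, p \in s -> G p.1 p.2) -> \sum_(p <- s) p.2 = 0 ->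
          forall p, p \in s -> p.2 = 0].

Fixpoint homs (V : Type) (G : int -> V -> Prop) (ds : seq int) (xs : seq V) : Prop :=
  match ds, xs with
  | [::], [::] => True
  | d :: ds', x :: xs' => G d x /\ homs G ds' xs'
  | _, _ => False
  end.

Definition sumz (ds : seq int) : int := \sum_(d <- ds) d.

Definition degree0 (V W : Type) (GV : int -> V -> Prop) (GW : int -> W -> Prop)
  (f : V -> W) : Prop := forall i x, GV i x -> GW i (f x).

(* the generic left-hand side of the A_oo identities for the list xs of
   homogeneous elements of degrees ds (k = size xs):
   sum_{m+n=k+1} sum_{i=1}^m (-1)^{i(n+1)+n(|x_1|+..+|x_{i-1}|)}
        op(x_1,..,x_{i-1}, op(x_i,..,x_{i+n-1}), x_{i+n},..,x_k),
   the final result being read through fin. *)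
Definition ainf_lhs (X : Type) (Y : lmodType K) (op : seq X -> X) (fin : X -> Y)
  (ds : seq int) (xs : seq X) : Y :=
  let k := size xs in
  \sum_(1 <= n < k.+1) \sum_(1 <= i < (k.+1 - n).+1)
     ((-1 : K) ^ ((i * (n + 1))%:Z + n%:Z * sumz (take i.-1 ds)))
       *: fin (op (take i.-1 xs ++ op (take n (drop i.-1 xs)) :: drop (i.-1 + n) xs)).

(* A_oo-algebra: mu xs is mu_n(x_1,..,x_n) for n = size xs >= 1 *)
Definition is_Ainf (A : lmodType K) (GA : int -> A -> Prop) (mu : seq A -> A) : Prop :=
  [/\ is_grading GA,
      forall (l r : seq A) (a : K) x y,
        mu (l ++ (a *: x + y) :: r) = a *: mu (l ++ x :: r) + mu (l ++ y :: r),
      forall ds xs, (0 < size xs)%N -> homs GA ds xs ->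
        GA (sumz ds + (size xs)%:Z - 2) (mu xs)
    &
      forall ds xs, (0 < size xs)%N -> homs GA ds xs -> ainf_lhs mu id ds xs = 0].

Section Mixed.
Variables (A M : lmodType K) (mu : seq A -> A) (nu : seq A -> M -> seq A -> M).

Definition getA (x : A + M) : A := if x is inl a then a else 0.
Definition getM (x : A + M) : M := if x is inr u then u else 0.
Definition isM (x : A + M) : bool := if x is inr _ then true else false.

(* operation on argument lists in which at most one argument lies in M:
   mu if all arguments are in A, and nu (with the M-argument in its place)
   otherwise *)
Definition opmix (xs : seq (A + M)) : A + M :=
  if has isM xs then
    let r := find isM xs in
    inr (nu (map getA (take r xs)) (getM (nth (inl 0) xs r)) (map getA (drop r.+1 xs)))
  else inl (mu (map getA xs)).
End Mixed.

(* representation: nu l u r is nu_n(a_1,..,a_{r-1},u,a_{r+1},..,a_n)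
   with l = [a_1..a_{r-1}], r = [a_{r+1}..a_n] *)
Definition is_rep (A : lmodType K) (GA : int -> A -> Prop) (mu : seq A -> A)
  (M : lmodType K) (GM : int -> M -> Prop) (nu : seq A -> M -> seq A -> M) : Prop :=
  is_grading GM /\ [/\
      forall l r (a : K) u v, nu l (a *: u + v) r = a *: nu l u r + nu l v r,
      forall l1 l2 r u (a : K) x y,
        nu (l1 ++ (a *: x + y) :: l2) u r = a *: nu (l1 ++ x :: l2) u r + nu (l1 ++ y :: l2) u r,
      forall l r1 r2 u (a : K) x y,
        nu l u (r1 ++ (a *: x + y) :: r2) = a *: nu l u (r1 ++ x :: r2) + nu l u (r1 ++ y :: r2),
      forall dl l d u dr r, homs GA dl l -> GM d u -> homs GA dr r ->
        GM (sumz dl + d + sumz dr + (size l + size r).+1%:Z - 2) (nu l u r)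
    &
      forall dl l d u dr r, homs GA dl l -> GM d u -> homs GA dr r ->
        ainf_lhs (opmix mu nu) (@getM A M) (dl ++ d :: dr)
           (map inl l ++ inr u :: map inl r) = 0].

(* semidirect product A + M (as the product module A * M) *)
Definition semi_grading (A M : lmodType K) (GA : int -> A -> Prop) (GM : int -> M -> Prop)
  : int -> (A * M)%type -> Prop := fun i p => GA i p.1 /\ GM i p.2.

Definition semi_mu (A M : lmodType K) (mu : seq A -> A) (nu : seq A -> M -> seq A -> M)
  (xs : seq (A * M)%type) : (A * M)%type :=
  (mu (map fst xs),
   \sum_(r < size xs) nu (map fst (take r xs)) (nth 0 xs r).2 (map fst (drop r.+1 xs))).

Definition is_strict_RB (A M : lmodType K) (GA : int -> A -> Prop) (mu : seq A -> A)
  (GM : int -> M -> Prop) (nu : seq A -> M -> seq A -> M) (R : {linear M -> A}) : Prop :=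
  degree0 GM GA R /\
  forall ds us, (0 < size us)%N -> homs GM ds us ->
    mu (map R us) =
    \sum_(r < size us) R (nu (map R (take r us)) (nth 0 us r) (map R (drop r.+1 us))).

Definition is_strict_Nijenhuis (B : lmodType K) (GB : int -> B -> Prop) (m : seq B -> B)
  (N : B -> B) : Prop :=
  [/\ linear N, degree0 GB GB N &
    forall ds bs, (0 < size bs)%N -> homs GB ds bs ->
      m (map N bs) =
      \sum_(1 <= k < (size bs).+1) ((-1 : K) ^+ k.-1) *:
         iter k N (\sum_(S : {set 'I_(size bs)} | #|S| == k)
            m [seq (if i \in S then nth 0 bs i else N (nth 0 bs i)) | i <- enum 'I_(size bs)])].

Definition tildeR (A M : lmodType K) (R : M -> A) (p : (A * M)%type) : (A * M)%type :=
  (R p.2, 0).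

End Defs.

From HB Require Import structures.
From mathcomp Require Import all_boot all_order all_algebra.
Set Implicit Arguments. Unset Strict Implicit. Unset Printing Implicit Defensive.
Import GRing.Theory.
Local Open Scope ring_scope.

(* tildeR squares to zero, so in the Nijenhuis identity for tildeR only the
   term k = 1 survives.  Since nu is linear in its module argument, the
   semidirect-product operation on arguments (R u_i, 0) is (mu (R u_1, .., R u_n), 0),
   and with the r-th argument (a_r, u_r) left untouched its M-component is
   nu (R u_1, .., u_r, .., R u_n).  Hence the Nijenhuis identity at (a_i, u_i)
   reads (mu (R u_i), 0) = (R (sum_r nu (R u_1, .., u_r, .., R u_n)), 0), which
   is the Rota-Baxter identity at (u_i).  Neither the A_oo relations nor the
   characteristic of K play any role. *)

Lemma nth_map_enum_ord (T : Type) n (F : 'I_n -> T) x0 k (lt_kn : (k < n)%N) :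
  nth x0 [seq F j | j <- enum 'I_n] k = F (Ordinal lt_kn).
Proof.
rewrite (nth_map (Ordinal lt_kn)) ?size_enum_ord //; congr F.
by apply: val_inj; rewrite /= nth_enum_ord.
Qed.

Lemma map_enum_set1E (T : Type) x0 (f : T -> T) (s : seq T) (i : 'I_(size s)) :
  [seq (if j \in [set i] then nth x0 s j else f (nth x0 s j)) | j <- enum 'I_(size s)]
  = take i (map f s) ++ nth x0 s i :: drop i.+1 (map f s).
Proof.
have -> : take i (map f s) ++ nth x0 s i :: drop i.+1 (map f s)
          = set_nth x0 (map f s) i (nth x0 s i) by rewrite set_nthE size_map ltn_ord.
apply: (@eq_from_nth _ x0) => [|k].
  by rewrite size_map size_enum_ord size_set_nth size_map (maxn_idPr _).
rewrite size_map size_enum_ord => lt_ks.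
rewrite (nth_map_enum_ord _ _ lt_ks) nth_set_nth in_set1 /=.
rewrite -(inj_eq val_inj) /=; case: eqP => [-> //|_].
by rewrite (nth_map x0).
Qed.

Section SemidirectProduct.
Variables (K : fieldType) (A M : lmodType K) (mu : seq A -> A)
  (nu : seq A -> M -> seq A -> M).
Hypothesis nu0 : forall l r, nu l 0 r = 0.

Lemma semi_mu_inl (xs : seq (A * M)) :
  {in xs, forall x, x.2 = 0} -> semi_mu mu nu xs = (mu (map fst xs), 0).
Proof.
move=> xs_inl; congr (_, _); apply: big1 => r _.
by rewrite xs_inl ?nu0 // mem_nth.
Qed.

Lemma semi_mu_cat_snd (l r : seq (A * M)) (b : A * M) :
  {in l ++ r, forall x, x.2 = 0} ->
  (semi_mu mu nu (l ++ b :: r)).2 = nu (map fst l) b.2 (map fst r).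
Proof.
move=> lr_inl; have b_idx : (size l < size (l ++ b :: r))%N.
  by rewrite size_cat /= -addSnnS leq_addr.
rewrite /= (bigD1 (Ordinal b_idx)) //= big1 ?addr0; last first.
  move=> k; rewrite -(inj_eq val_inj) /= => k_neq.
  suff -> : (nth 0 (l ++ b :: r) k).2 = 0 by rewrite nu0.
  rewrite nth_cat; case: ltnP => [lt_kl|le_lk].
    by rewrite lr_inl // mem_cat mem_nth.
  have [j ->] : exists j, (k - size l)%N = j.+1.
    by exists (k - size l)%N.-1; rewrite prednK // subn_gt0 ltn_neqAle eq_sym k_neq.
  have [lt_jr|le_rj] := ltnP j (size r); last by rewrite nth_default.
  by rewrite /= lr_inl // mem_cat mem_nth ?orbT.
by rewrite nth_cat ltnn subnn take_size_cat // -cat_rcons drop_size_cat ?size_rcons.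
Qed.

Variable R : {linear M -> A}.

Lemma tildeR_is_linear : linear (tildeR R).
Proof. by move=> a x y; rewrite /tildeR /= linearP -[RHS]/(_, a *: 0 + 0) scaler0 addr0. Qed.

Lemma iter_tildeR k x : (1 < k)%N -> iter k (tildeR R) x = 0.
Proof. by case: k => [|[|k]] // _; rewrite !iterS /tildeR /= linear0. Qed.

Lemma semi_mu_tildeR (bs : seq (A * M)) :
  semi_mu mu nu (map (tildeR R) bs) = (mu (map R (map snd bs)), 0).
Proof. by rewrite semi_mu_inl -?map_comp // => _ /mapP[x _ ->]. Qed.

Lemma semi_mu_tildeR_except (bs : seq (A * M)) (i : 'I_(size bs)) :
  (semi_mu mu nu [seq (if j \in [set i] then nth 0 bs j else tildeR R (nth 0 bs j))
                 | j <- enum 'I_(size bs)]).2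
  = nu (map R (take i (map snd bs))) (nth 0 (map snd bs) i) (map R (drop i.+1 (map snd bs))).
Proof.
rewrite map_enum_set1E semi_mu_cat_snd; last first.
  by move=> x; rewrite mem_cat => /orP[/mem_take|/mem_drop] /mapP[y _ ->].
by rewrite (nth_map 0) // !map_take !map_drop -!map_comp.
Qed.

Lemma Nijenhuis_rhs_tildeR (bs : seq (A * M)) : (0 < size bs)%N ->
  \sum_(1 <= k < (size bs).+1) ((-1 : K) ^+ k.-1) *:
     iter k (tildeR R) (\sum_(S : {set 'I_(size bs)} | #|S| == k)
        semi_mu mu nu [seq (if i \in S then nth 0 bs i else tildeR R (nth 0 bs i))
                      | i <- enum 'I_(size bs)])
  = (R (\sum_(r < size bs) nu (map R (take r (map snd bs))) (nth 0 (map snd bs) r)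
                              (map R (drop r.+1 (map snd bs)))), 0).
Proof.
move=> bs_gt0; rewrite big_ltn ?ltnS // [X in _ + X]big1_seq ?addr0; last first.
  by move=> k /=; rewrite mem_index_iota => /andP[k_gt1 _]; rewrite iter_tildeR // scaler0.
rewrite expr0 scale1r /= {1}/tildeR (big_morph snd (fun _ _ => erefl) erefl).
by rewrite big_cards1; under eq_bigr => i _ do rewrite semi_mu_tildeR_except.
Qed.

End SemidirectProduct.

Lemma is_rep_nu0 (K : fieldType) (A : lmodType K) GA (mu : seq A -> A)
    (M : lmodType K) GM (nu : seq A -> M -> seq A -> M) :
  is_rep GA mu GM nu -> forall l r, nu l 0 r = 0.
Proof.
case=> _ [nu_linear _ _ _ _] l r; have := nu_linear l r 1 0 0.
by rewrite !scale1r addr0 => nu00; apply: (addrI (nu l 0 r)); rewrite addr0 -nu00.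
Qed.

Section Gradings.
Variables (K : fieldType) (A M : lmodType K) (GA : int -> A -> Prop) (GM : int -> M -> Prop).

Lemma homs_semi_snd ds (bs : seq (A * M)) :
  homs (semi_grading GA GM) ds bs -> homs GM ds (map snd bs).
Proof. by elim: ds bs => [|d ds IH] [|b bs] //= [[_ ?] /IH]. Qed.

Lemma homs_semi_inr ds (us : seq M) : (forall i, GA i 0) ->
  homs GM ds us -> homs (semi_grading GA GM) ds (map (pair 0) us).
Proof. by move=> GA0; elim: ds us => [|d ds IH] [|u us] //= [? /IH]. Qed.

Lemma degree0_tildeR (R : M -> A) : (forall i, GM i 0) ->
  degree0 GM GA R -> degree0 (semi_grading GA GM) (semi_grading GA GM) (tildeR R).
Proof. by move=> GM0 R_deg0 i x [_ ?]; split; [apply: R_deg0|]. Qed.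

End Gradings.

Theorem proposition6p11 (K : fieldType) (charK : [pchar K] =i pred0)
  (A : lmodType K) (GA : int -> A -> Prop) (mu : seq A -> A)
  (M : lmodType K) (GM : int -> M -> Prop) (nu : seq A -> M -> seq A -> M)
  (HA : is_Ainf GA mu) (HM : is_rep GA mu GM nu)
  (R : {linear M -> A}) (HR : degree0 GM GA R) :
  is_strict_RB GA mu GM nu R <->
  is_strict_Nijenhuis (semi_grading GA GM) (semi_mu mu nu) (tildeR R).
Proof.
have nu0 := is_rep_nu0 HM.
have GA0 : forall i, GA i 0 by case: HA => [[]].
have GM0 : forall i, GM i 0 by case: HM => [[]].
split=> [[_ RB_id]|[_ _ N_id]].
  split; [exact: tildeR_is_linear|exact: degree0_tildeR|].
  move=> ds bs bs_gt0 bs_hom; rewrite semi_mu_tildeR // Nijenhuis_rhs_tildeR //.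
  by rewrite linear_sum (RB_id ds) ?size_map //; apply: homs_semi_snd bs_hom.
split=> // ds us us_gt0 us_hom.
pose bs : seq (A * M) := map (pair 0) us.
have bs_us : map snd bs = us by rewrite -map_comp map_id.
have size_bs : size bs = size us by rewrite size_map.
have bs_gt0 : (0 < size bs)%N by rewrite size_bs.
have := N_id ds bs bs_gt0 (homs_semi_inr GA0 us_hom).
rewrite semi_mu_tildeR // Nijenhuis_rhs_tildeR // bs_us size_bs.
by move=> [->]; rewrite linear_sum.
Qed.
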